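(* Let $n\ge2$ be an integer, $j$ a positive integer, $\lambda\in\mathbb{R}$ with $\lambda\ge\frac{(n-1)j}{2}$, and set $\alpha=1-\frac1n$, $\beta=\frac12(1-\frac1n)-\frac{\lambda}{jn}$. Define $\mathcal{G}(z)=e^{jz^n/2}\,\mathcal{M}(\beta,\alpha,-jz^n)$ and $\mathcal{D}(z)=e^{jz^n/2}\,\mathcal{T}(\beta,\alpha,-jz^n)$ for $z>0$. Then the Wronskian $\mathcal{G}(z)\mathcal{D}'(z)-\mathcal{G}'(z)\mathcal{D}(z)$ is constant, equal to $\frac{\Gamma(\alpha-1)}{\Gamma(\alpha-\beta)}\,j^{1/n}$.
   Context: $(x)_k=\prod_{m=1}^k(x+m-1)$, $(x)_0=1$. Kummer's function: $\mathcal{M}(\beta,\alpha,y)=\sum_{k\ge0}\frac{(\beta)_k}{(\alpha)_k}\frac{y^k}{k!}$. For $y<0$ and $\alpha>\beta$: $\mathcal{T}(\beta,\alpha,y)=\frac{e^y}{\Gamma(\alpha-\beta)}\int_0^\infty e^{yt}t^{\alpha-\beta-1}(1+t)^{\beta-1}\,dt$. *)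

From Stdlib Require Import Reals ZArith.
From Coquelicot Require Import Coquelicot.
Open Scope R_scope.

Fixpoint poch (x : R) (k : nat) : R :=
  match k with
  | O => 1
  | S k' => poch x k' * (x + INR k')
  end.

Definition kummerM (b a y : R) : R :=
  Series (fun k => poch b k / poch a k * y ^ k / INR (fact k)).

Definition Gamma_pos (s : R) : R :=
  RInt_gen (fun t => Rpower t (s - 1) * exp (- t))
           (at_right 0) (Rbar_locally p_infty).

(* Gamma on all reals that are not non-positive integers, extended from
   (0,oo) by the functional equation: Gamma x = Gamma(x+N)/(x)_N with
   N = max(0, ceil-ish(-x)) so that x + N > 0. *)
Definition Gamma (x : R) : R :=
  let N := Z.to_nat (up (- x)) in
  Gamma_pos (x + INR N) / poch x N.

(* Tricomi-type function, for y < 0 and a > b: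
   T(b,a,y) = e^y/Gamma(a-b) int_0^oo e^(y t) t^(a-b-1) (1+t)^(b-1) dt. *)
Definition kummerT (b a y : R) : R :=
  exp y / Gamma (a - b) *
  RInt_gen (fun t => exp (y * t) * Rpower t (a - b - 1) * Rpower (1 + t) (b - 1))
           (at_right 0) (Rbar_locally p_infty).

From Stdlib Require Import Reals Lra Lia Factorial FunctionalExtensionality.
From Coquelicot Require Import Coquelicot.
Open Scope R_scope.

(** Put [X = j z^n], so that [G = e^(X/2) u(X)] and [D = e^(X/2) v(X)] with
    [u(x) = M(beta, alpha, -x)] and [v(x) = T(beta, alpha, -x) = e^(-x) L(x) / Gamma(alpha - beta)],
    where [L] is the Laplace transform of [t^(alpha-beta-1) (1+t)^(beta-1)]; then
    [G D' - G' D = X' e^X W(u, v)(X)].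
    Both [u] (a power series) and [v] (by differentiation under the integral sign and an
    integration by parts) solve [x w'' + (alpha + x) w' + beta w = 0], so by Abel's identity
    [x^alpha e^x W(u, v)(x)] is constant. Letting [x -> 0+], where [u -> 1], [x^alpha L -> 0] and
    [x^alpha L' -> - Gamma(alpha)], the constant is [- Gamma(alpha) / Gamma(alpha - beta)].
    Finally [X' X^(-alpha) = n j^(1/n)] and [Gamma(alpha - 1) = - n Gamma(alpha)], as
    [alpha - 1 = -1/n]. *)

Lemma exp_le_compat (x y : R) : x <= y -> exp x <= exp y.
Proof. intros [H|H]; [left; now apply exp_increasing | rewrite H; lra]. Qed.

Lemma exp_neg_mult_le_1 (x t : R) : 0 <= x -> 0 <= t -> exp (- x * t) <= 1.
Proof. intros Hx Ht. rewrite <- exp_0. apply exp_le_compat. nra. Qed.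

Lemma Rpower_gt_0 (t p : R) : 0 < Rpower t p.
Proof. apply exp_pos. Qed.

Lemma Rpower_1_base (p : R) : Rpower 1 p = 1.
Proof. unfold Rpower. now rewrite ln_1, Rmult_0_r, exp_0. Qed.

Lemma Rpower_plus_1 (t p : R) : 0 < t -> Rpower t (p + 1) = Rpower t p * t.
Proof. intros Ht. now rewrite Rpower_plus, Rpower_1. Qed.

Lemma Rpower_le_l_nonpos (s w e : R) : 0 < s <= w -> e <= 0 -> Rpower w e <= Rpower s e.
Proof.
  intros Hsw He. unfold Rpower. apply exp_le_compat.
  assert (ln s <= ln w) by (apply ln_le; lra). nra.
Qed.

Lemma Rpower_le_1_base_ge_1 (t e : R) : 1 <= t -> e <= 0 -> Rpower t e <= 1.
Proof.
  intros Ht He. rewrite <- (Rpower_1_base e). apply Rpower_le_l_nonpos; lra.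
Qed.

Lemma ln_succ_le (u : R) : 0 < u -> ln (1 + u) <= u.
Proof. intros Hu. rewrite <- (ln_exp u) at 2. apply ln_le; [lra | apply exp_ineq1_le]. Qed.

Lemma Rpower_sub_Rpower_succ_le (e t : R) : e <= 0 -> 0 < t ->
  0 <= Rpower t e - Rpower (1 + t) e <= - e * Rpower t (e - 1).
Proof.
  intros He Ht. split.
  - generalize (Rpower_le_l_nonpos t (1 + t) e ltac:(lra) He). lra.
  - assert (Hinv : 0 < / t) by now apply Rinv_0_lt_compat.
    assert (Hln : ln (1 + t) - ln t <= / t).
    { replace (1 + t) with (t * (1 + / t)) by (field; lra).
      rewrite ln_mult by lra. generalize (ln_succ_le (/ t) Hinv). lra. }
    (* [(1 + t)^e = t^e exp (e (ln (1 + t) - ln t)) >= t^e (1 + e / t)] *)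
    assert (Hsucc : Rpower t e * (1 + e * / t) <= Rpower (1 + t) e).
    { replace (Rpower (1 + t) e) with (Rpower t e * exp (e * (ln (1 + t) - ln t)))
        by (unfold Rpower; rewrite <- exp_plus; f_equal; ring).
      apply Rmult_le_compat_l; [left; apply Rpower_gt_0|].
      eapply Rle_trans; [|apply exp_ineq1_le]. nra. }
    replace (Rpower t e) with (Rpower t (e - 1) * t) in *
      by (rewrite <- Rpower_plus_1 by lra; f_equal; ring).
    replace (Rpower t (e - 1) * t * (1 + e * / t)) with (Rpower t (e - 1) * t + e * Rpower t (e - 1))
      in Hsucc by (field; lra).
    lra.
Qed.

Lemma is_derive_Rpower (t p : R) : 0 < t ->
  is_derive (fun t => Rpower t p) t (p * Rpower t (p - 1)).
Proof. intros Ht. apply is_derive_Reals, derivable_pt_lim_power, Ht. Qed.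

Lemma Derive_Rpower (t p : R) : 0 < t ->
  Derive (fun t => Rpower t p) t = p * Rpower t (p - 1).
Proof. intros Ht. now apply is_derive_unique, is_derive_Rpower. Qed.

Lemma continuous_Rpower (t p : R) : 0 < t -> continuous (fun t => Rpower t p) t.
Proof. intros Ht. refine (ex_derive_continuous _ _ _). eexists. now apply is_derive_Rpower. Qed.

Lemma is_derive_comp_opp (f : R -> R) (x df : R) :
  is_derive f (- x) df -> is_derive (fun x => f (- x)) x (- df).
Proof.
  intros Hf. auto_derive; [eexists; exact Hf|].
  replace (Derive (fun x => f x) (- x)) with df by (symmetry; now apply is_derive_unique).
  ring.
Qed.

Lemma Rpower_mul_exp_bounded (p c : R) : 0 < c ->
  exists K, 0 < K /\ forall t, 1 <= t -> Rpower t p * exp (- c * t) <= K.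
Proof.
  intros Hc. destruct (INR_unbounded (Rmax p 1)) as [m Hm].
  assert (Hm1 : 1 < INR m) by (generalize (Rmax_r p 1); lra).
  assert (Hmp : p < INR m) by (generalize (Rmax_l p 1); lra).
  assert (HmK : 0 <= (INR m / c) ^ m)
    by (apply pow_le; apply Rlt_le, Rdiv_lt_0_compat; lra).
  exists ((INR m / c) ^ m + 1). split; [lra|]. intros t Ht.
  assert (Hpow : Rpower t p <= t ^ m)
    by (rewrite <- Rpower_pow by lra; apply Rle_Rpower; lra).
  (* from [exp y >= 1 + y] with [y = c t / m] *)
  assert (Hexp : (c * t / INR m) ^ m <= exp (c * t)).
  { replace (exp (c * t)) with (exp (c * t / INR m) ^ m).
    - apply pow_incr. split.
      + apply Rlt_le, Rdiv_lt_0_compat; nra.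
      + generalize (exp_ineq1_le (c * t / INR m)); lra.
    - rewrite <- Rpower_pow by apply exp_pos. unfold Rpower.
      rewrite ln_exp. f_equal. field. lra. }
  assert (Hpos : 0 < (c * t / INR m) ^ m) by (apply pow_lt, Rdiv_lt_0_compat; nra).
  assert (Ht_m : t ^ m = (INR m / c) ^ m * (c * t / INR m) ^ m)
    by (rewrite <- Rpow_mult_distr; f_equal; field; lra).
  rewrite Ropp_mult_distr_l_reverse, exp_Ropp.
  apply Rle_trans with (t ^ m * / (c * t / INR m) ^ m).
  - apply Rmult_le_compat; try lra.
    + left; apply Rpower_gt_0.
    + left; apply Rinv_0_lt_compat, exp_pos.
    + apply Rinv_le_contravar; assumption.
  - rewrite Ht_m, Rmult_assoc, Rinv_r by lra. lra.
Qed.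

Lemma abs_exp_sub_1_le (u : R) : Rabs (exp u - 1) <= Rabs u * exp (Rabs u).
Proof.
  assert (H1 := exp_ineq1_le u). assert (H2 := exp_ineq1_le (- u)).
  assert (Hinv : exp (- u) * exp u = 1) by (rewrite <- exp_plus, Rplus_opp_l; apply exp_0).
  assert (0 < exp u) by apply exp_pos.
  destruct (Rle_or_lt 0 u) as [Hu|Hu].
  - rewrite !(Rabs_pos_eq u), Rabs_pos_eq by lra. nra.
  - assert (exp u <= 1) by (rewrite <- exp_0; apply exp_le_compat; lra).
    rewrite !(Rabs_left u), Rabs_left1 by lra. nra.
Qed.

Lemma abs_exp_sub_1_sub_le (u : R) : Rabs (exp u - 1 - u) <= u ^ 2 * exp (Rabs u).
Proof.
  destruct (MVT_gen exp 0 u exp) as [c [Hc Heq]].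
  - intros; apply is_derive_Reals, derivable_pt_lim_exp.
  - intros; apply derivable_continuous_pt, derivable_pt_exp.
  - rewrite exp_0 in Heq.
    replace (exp u - 1 - u) with (u * (exp c - 1)) by (rewrite Heq; ring).
    assert (Hcu : Rabs c <= Rabs u).
    { destruct (Rle_or_lt 0 u).
      - rewrite Rmin_left, Rmax_right in Hc by lra. rewrite !Rabs_pos_eq by lra. lra.
      - rewrite Rmin_right, Rmax_left in Hc by lra. rewrite !Rabs_left1 by lra. lra. }
    rewrite Rabs_mult, <- (pow2_abs u).
    apply Rle_trans with (Rabs u * (Rabs c * exp (Rabs c))).
    + apply Rmult_le_compat_l; [apply Rabs_pos | apply abs_exp_sub_1_le].
    + replace (Rabs u ^ 2 * exp (Rabs u)) with (Rabs u * (Rabs u * exp (Rabs u))) by ring.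
      apply Rmult_le_compat_l; [apply Rabs_pos|].
      apply Rmult_le_compat; [apply Rabs_pos | left; apply exp_pos | exact Hcu |].
      now apply exp_le_compat.
Qed.

Lemma exp_diff_quotient_le (x h t : R) : 0 < t -> h <> 0 -> Rabs h < x / 2 ->
  Rabs ((exp (- (x + h) * t) - exp (- x * t)) / h + t * exp (- x * t))
  <= Rabs h * (t ^ 2 * exp (- (x / 2) * t)).
Proof.
  intros Ht Hh Hhx.
  replace ((exp (- (x + h) * t) - exp (- x * t)) / h + t * exp (- x * t))
    with (exp (- x * t) * (exp (- h * t) - 1 - (- h * t)) / h)
    by (replace (- (x + h) * t) with (- x * t + - h * t) by ring; rewrite exp_plus; field; exact Hh).
  assert (Hh0 : 0 < Rabs h) by now apply Rabs_pos_lt.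
  assert (Hexp : exp (- x * t) * exp (Rabs h * t) <= exp (- (x / 2) * t))
    by (rewrite <- exp_plus; apply exp_le_compat; nra).
  set (E := exp (- (x / 2) * t)) in *.
  unfold Rdiv. rewrite !Rabs_mult, Rabs_inv, (Rabs_pos_eq (exp _)) by (left; apply exp_pos).
  assert (Htaylor := abs_exp_sub_1_sub_le (- h * t)).
  replace (Rabs (- h * t)) with (Rabs h * t) in Htaylor
    by (rewrite Rabs_mult, Rabs_Ropp, (Rabs_pos_eq t) by lra; reflexivity).
  replace ((- h * t) ^ 2) with (Rabs h * Rabs h * t ^ 2) in Htaylor
    by (rewrite <- Rabs_mult, Rabs_pos_eq by apply Rle_0_sqr; ring).
  apply Rmult_le_reg_r with (Rabs h); [exact Hh0|].
  rewrite Rmult_assoc, Rinv_l, Rmult_1_r by lra.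
  apply Rle_trans with (exp (- x * t) * (Rabs h * Rabs h * t ^ 2 * exp (Rabs h * t))).
  - apply Rmult_le_compat_l; [left; apply exp_pos | exact Htaylor].
  - replace (exp (- x * t) * (Rabs h * Rabs h * t ^ 2 * exp (Rabs h * t)))
      with ((Rabs h * Rabs h * t ^ 2) * (exp (- x * t) * exp (Rabs h * t))) by ring.
    replace (Rabs h * (t ^ 2 * E) * Rabs h) with ((Rabs h * Rabs h * t ^ 2) * E) by ring.
    apply Rmult_le_compat_l; [|exact Hexp].
    apply Rmult_le_pos; [apply Rle_0_sqr | apply pow_le; lra].
Qed.

Lemma is_derive_of_diff_quotient_le (F : R -> R) (x l B d : R) : 0 < d ->
  (forall h, h <> 0 -> Rabs h < d -> Rabs ((F (x + h) - F x) / h - l) <= Rabs h * B) ->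
  is_derive F x l.
Proof.
  intros Hd HF. apply is_derive_Reals. intros eps Heps.
  assert (HB0 := Rabs_pos B).
  assert (Hdelta : 0 < Rmin d (eps / (Rabs B + 1)))
    by (apply Rmin_glb_lt; [exact Hd | apply Rdiv_lt_0_compat; lra]).
  exists (mkposreal _ Hdelta). intros h Hh0 Hh. cbn in Hh.
  assert (Hhd : Rabs h < d) by (eapply Rlt_le_trans; [exact Hh | apply Rmin_l]).
  assert (Hheps : Rabs h < eps / (Rabs B + 1)) by (eapply Rlt_le_trans; [exact Hh | apply Rmin_r]).
  eapply Rle_lt_trans; [now apply HF|].
  apply Rle_lt_trans with (Rabs h * Rabs B).
  { apply Rmult_le_compat_l; [apply Rabs_pos | apply Rle_abs]. }
  apply Rle_lt_trans with (eps / (Rabs B + 1) * Rabs B); [apply Rmult_le_compat_r; lra|].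
  apply Rmult_lt_reg_r with (Rabs B + 1); [lra|]. field_simplify; lra.
Qed.

Section Limits.

Context {T : Type} {F : (T -> Prop) -> Prop} {FF : Filter F}.

Lemma filterlim_Rplus (f g : T -> R) (a b : R) :
  filterlim f F (locally a) -> filterlim g F (locally b) ->
  filterlim (fun x => f x + g x) F (locally (a + b)).
Proof. intros Hf Hg. exact (filterlim_comp_2 f g plus Hf Hg (filterlim_plus a b)). Qed.

Lemma filterlim_Rminus (f g : T -> R) (a b : R) :
  filterlim f F (locally a) -> filterlim g F (locally b) ->
  filterlim (fun x => f x - g x) F (locally (a - b)).
Proof.
  intros Hf Hg. apply (filterlim_Rplus f (fun x => - g x)); [exact Hf|].
  eapply filterlim_comp; [exact Hg | exact (filterlim_opp (V := R_NormedModule) b)].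
Qed.

Lemma filterlim_Rmult (f g : T -> R) (a b : R) :
  filterlim f F (locally a) -> filterlim g F (locally b) ->
  filterlim (fun x => f x * g x) F (locally (a * b)).
Proof. intros Hf Hg. exact (filterlim_comp_2 f g mult Hf Hg (filterlim_mult a b)). Qed.

Lemma filterlim_0_abs_le (f g : T -> R) :
  F (fun x => Rabs (f x) <= g x) -> filterlim g F (locally 0) -> filterlim f F (locally 0).
Proof.
  intros Hfg Hg. apply filterlim_locally. intros eps.
  generalize (filter_and _ _ Hfg (proj1 (filterlim_locally g 0) Hg eps)).
  apply filter_imp. intros x [Hle Hball].
  change (Rabs (g x - 0) < eps) in Hball. change (Rabs (f x - 0) < eps).
  rewrite Rminus_0_r in *. apply Rle_lt_trans with (g x); [exact Hle|].
  eapply Rle_lt_trans; [apply Rle_abs | exact Hball].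
Qed.

Lemma filterlim_scal_0 (c : R) (g : T -> R) :
  filterlim g F (locally 0) -> filterlim (fun x => c * g x) F (locally 0).
Proof.
  intros Hg. rewrite <- (Rmult_0_r c). apply filterlim_Rmult; [apply filterlim_const | exact Hg].
Qed.

Lemma filterlim_0_eventually_lt (g : T -> R) (e : R) :
  filterlim g F (locally 0) -> 0 < e -> F (fun x => g x < e).
Proof.
  intros Hg He. generalize (proj1 (filterlim_locally g 0) Hg (mkposreal e He)).
  apply filter_imp. intros x Hx. change (Rabs (g x - 0) < e) in Hx.
  rewrite Rminus_0_r in Hx. eapply Rle_lt_trans; [apply Rle_abs | exact Hx].
Qed.

End Limits.

Lemma abs_le_of_filterlim {T : Type} {F : (T -> Prop) -> Prop} {FF : ProperFilter F}
  (g : T -> R) (l B : R) :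
  filterlim g F (locally l) -> F (fun x => Rabs (g x) <= B) -> Rabs l <= B.
Proof.
  intros Hg HB.
  apply (closed_filterlim_loc (FF := Proper_StrongProper F FF) g (fun y => Rabs y <= B) l Hg HB).
  apply (closed_comp Rabs (fun y => y <= B)); [apply continuous_Rabs | apply closed_le].
Qed.

Lemma filterlim_Rpower_at_right_0 (s : R) : 0 < s ->
  filterlim (fun t => Rpower t s) (at_right 0) (locally 0).
Proof.
  intros Hs. apply filterlim_locally. intros eps.
  assert (Hd : 0 < Rpower eps (/ s)) by apply Rpower_gt_0.
  exists (mkposreal _ Hd). intros t Ht Ht0.
  change (Rabs (t - 0) < Rpower eps (/ s)) in Ht. apply Rabs_lt_between in Ht.
  change (Rabs (Rpower t s - 0) < eps).
  rewrite Rminus_0_r, Rabs_pos_eq by (left; apply Rpower_gt_0).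
  replace (pos eps) with (Rpower (Rpower eps (/ s)) s)
    by (rewrite Rpower_mult, Rinv_l, Rpower_1 by (try apply cond_pos; lra); reflexivity).
  apply Rlt_Rpower_l; lra.
Qed.

Lemma filterlim_Rpower_p_infty (s : R) : s < 0 ->
  filterlim (fun t => Rpower t s) (Rbar_locally p_infty) (locally 0).
Proof.
  intros Hs. apply filterlim_locally. intros eps.
  exists (Rmax 1 (Rpower eps (/ s))). intros t Ht.
  assert (H1 : 1 < t) by (eapply Rle_lt_trans; [apply Rmax_l | exact Ht]).
  assert (H2 : Rpower eps (/ s) < t) by (eapply Rle_lt_trans; [apply Rmax_r | exact Ht]).
  change (Rabs (Rpower t s - 0) < eps).
  rewrite Rminus_0_r, Rabs_pos_eq by (left; apply Rpower_gt_0).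
  replace s with (- - s) by ring. rewrite Rpower_Ropp.
  replace (pos eps) with (/ Rpower (Rpower eps (/ s)) (- s)).
  - apply Rinv_lt_contravar.
    + apply Rmult_lt_0_compat; apply Rpower_gt_0.
    + apply Rlt_Rpower_l; [lra | split; [apply Rpower_gt_0 | lra]].
  - rewrite Rpower_mult. replace (/ s * - s) with (- (1)) by (field; lra).
    rewrite Rpower_Ropp, Rpower_1 by apply cond_pos. apply Rinv_inv.
Qed.

Lemma filterlim_Rpower_mul_bounded (s B : R) (g : R -> R) :
  0 < s -> (forall x, 0 < x -> Rabs (g x) <= B) ->
  filterlim (fun x => Rpower x s * g x) (at_right 0) (locally 0).
Proof.
  intros Hs Hg.
  apply filterlim_0_abs_le with (fun x => B * Rpower x s);
    [|now apply filterlim_scal_0, filterlim_Rpower_at_right_0].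
  exists (mkposreal 1 Rlt_0_1). intros x _ Hx.
  rewrite Rabs_mult, Rabs_pos_eq, Rmult_comm by (left; apply Rpower_gt_0).
  apply Rmult_le_compat_r; [left; apply Rpower_gt_0 | now apply Hg].
Qed.

Lemma filterlim_at_right_continuous (f : R -> R) (x : R) :
  continuous f x -> filterlim f (at_right x) (locally (f x)).
Proof. intros Hf. eapply filterlim_filter_le_1; [apply filter_le_within | exact Hf]. Qed.

(** * Improper integrals over (0, +oo) *)

Notation ends_0_infty := (filter_prod (at_right 0) (Rbar_locally p_infty)).

Lemma ends_0_infty_intro (P : R * R -> Prop) :
  (exists d M, 0 < d /\ forall u v, 0 < u < d -> M < v -> P (u, v)) -> ends_0_infty P.
Proof.
  intros [d [M [Hd H]]].
  apply Filter_prod with (fun u => 0 < u < d) (fun v => M < v).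
  - exists (mkposreal d Hd). intros u Hu Hu0.
    change (Rabs (u - 0) < d) in Hu. apply Rabs_lt_between in Hu. lra.
  - now exists M.
  - intros u v Hu Hv. now apply H.
Qed.

Lemma ends_0_infty_pos : ends_0_infty (fun ab => 0 < fst ab /\ 0 < snd ab).
Proof.
  apply ends_0_infty_intro. exists 1, 0. split; [lra|]. intros u v Hu Hv. cbn. lra.
Qed.

Lemma ends_0_infty_le : ends_0_infty (fun ab => fst ab <= snd ab).
Proof. apply ends_0_infty_intro. exists 1, 1. split; [lra|]. intros u v Hu Hv. cbn. lra. Qed.

Lemma filterlim_ends_0_infty_fst : filterlim fst ends_0_infty (at_right 0).
Proof. intros P HP. apply Filter_prod with P (fun _ => True); auto. now exists 0. Qed.

Lemma filterlim_ends_0_infty_snd : filterlim snd ends_0_infty (Rbar_locally p_infty).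
Proof.
  intros P HP. apply Filter_prod with (fun _ => True) P; auto.
  exists (mkposreal 1 Rlt_0_1). auto.
Qed.

Lemma ex_RInt_pos (f : R -> R) (u v : R) :
  (forall t, 0 < t -> continuous f t) -> 0 < u -> 0 < v -> ex_RInt f u v.
Proof.
  intros Hf Hu Hv. apply (ex_RInt_continuous (V := R_CompleteNormedModule)).
  intros t Ht. apply Hf. assert (0 < Rmin u v) by now apply Rmin_glb_lt. lra.
Qed.

Lemma is_RInt_gen_0_infty_iff (f : R -> R) (l : R) :
  (forall t, 0 < t -> continuous f t) ->
  is_RInt_gen f (at_right 0) (Rbar_locally p_infty) l <->
  filterlim (fun ab => RInt f (fst ab) (snd ab)) ends_0_infty (locally l).
Proof.
  intros Hf. split.
  - intros H P HP. specialize (H P HP). unfold filtermapi in H. unfold filtermap.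
    revert H. apply filter_imp. intros ab [y [Hy HPy]]. now rewrite (is_RInt_unique _ _ _ _ Hy).
  - intros H P HP.
    assert (HP' : ends_0_infty (fun ab => P (RInt f (fst ab) (snd ab)))) by exact (H P HP).
    unfold filtermapi. generalize (filter_and _ _ ends_0_infty_pos HP'). apply filter_imp.
    intros [u v] [[Hu Hv] HPuv]. exists (RInt f u v). split; [|exact HPuv].
    apply (RInt_correct (V := R_CompleteNormedModule)). now apply ex_RInt_pos.
Qed.

Lemma is_RInt_gen_0_infty_derive (F f : R -> R) (l0 l1 : R) :
  (forall t, 0 < t -> is_derive F t (f t)) ->
  (forall t, 0 < t -> continuous f t) ->
  filterlim F (at_right 0) (locally l0) ->
  filterlim F (Rbar_locally p_infty) (locally l1) ->
  is_RInt_gen f (at_right 0) (Rbar_locally p_infty) (l1 - l0).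
Proof.
  intros HF Hf H0 H1. apply is_RInt_gen_0_infty_iff; [exact Hf|].
  apply filterlim_ext_loc with (fun ab => F (snd ab) - F (fst ab)).
  - generalize ends_0_infty_pos. apply filter_imp. intros [u v] [Hu Hv]. simpl in Hu, Hv |- *.
    symmetry. apply is_RInt_unique, (is_RInt_derive (V := R_CompleteNormedModule)).
    + intros t Ht. apply HF. assert (0 < Rmin u v) by now apply Rmin_glb_lt. lra.
    + intros t Ht. apply Hf. assert (0 < Rmin u v) by now apply Rmin_glb_lt. lra.
  - apply filterlim_Rminus.
    + eapply filterlim_comp; [exact filterlim_ends_0_infty_snd | exact H1].
    + eapply filterlim_comp; [exact filterlim_ends_0_infty_fst | exact H0].
Qed.

Lemma filterlim_scale_ends_0_infty (x : R) : 0 < x ->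
  filterlim (fun ab => (x * fst ab, x * snd ab)) ends_0_infty ends_0_infty.
Proof.
  intros Hx P [Q S [d HQ] [M HS] HQS].
  apply Filter_prod with (fun u => Q (x * u)) (fun v => S (x * v)).
  - assert (Hd : 0 < d / x) by (apply Rdiv_lt_0_compat; [apply cond_pos | exact Hx]).
    exists (mkposreal _ Hd). intros u Hu Hu0. apply HQ; [|nra].
    change (Rabs (u - 0) < d / x) in Hu. change (Rabs (x * u - 0) < d).
    rewrite Rminus_0_r in *. rewrite Rabs_mult, Rabs_pos_eq by lra.
    apply Rmult_lt_reg_l with (/ x); [now apply Rinv_0_lt_compat|].
    rewrite <- Rmult_assoc, Rinv_l, Rmult_1_l by lra. lra.
  - exists (M / x). intros v Hv. apply HS.
    apply Rmult_lt_compat_l with (r := x) in Hv; [|exact Hx].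
    replace (x * (M / x)) with M in Hv by (field; lra). exact Hv.
  - intros u v Hu Hv. now apply HQS.
Qed.

Lemma is_RInt_gen_0_infty_scale (f : R -> R) (x l : R) :
  0 < x -> (forall t, 0 < t -> continuous f t) ->
  is_RInt_gen f (at_right 0) (Rbar_locally p_infty) l ->
  is_RInt_gen (fun t => x * f (x * t)) (at_right 0) (Rbar_locally p_infty) l.
Proof.
  intros Hx Hf Hl. apply is_RInt_gen_0_infty_iff in Hl; [|exact Hf].
  assert (Hfx : forall t, 0 < t -> continuous (fun t => x * f (x * t)) t).
  { intros t Ht. apply (continuous_mult (K := R_AbsRing)); [apply continuous_const|].
    apply (continuous_comp (fun t => x * t) f).
    - refine (ex_derive_continuous _ _ _). auto_derive. exact I.
    - apply Hf. nra. }
  apply is_RInt_gen_0_infty_iff; [exact Hfx|].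
  apply filterlim_ext_loc with (fun ab => RInt f (x * fst ab) (x * snd ab)).
  - generalize ends_0_infty_pos. apply filter_imp. intros [u v] [Hu Hv]. simpl in Hu, Hv |- *.
    rewrite <- (Rplus_0_r (x * u)), <- (Rplus_0_r (x * v)).
    rewrite <- (RInt_comp_lin (V := R_CompleteNormedModule)) by (apply ex_RInt_pos; nra || exact Hf).
    apply RInt_ext. intros t Ht. now rewrite Rplus_0_r.
  - exact (filterlim_comp _ _ _ _ (fun ab => RInt f (fst ab) (snd ab)) _ _ _
             (filterlim_scale_ends_0_infty x Hx) Hl).
Qed.

Lemma abs_RInt_le_power (f : R -> R) (C s u v : R) :
  0 < u <= v -> s + 1 <> 0 ->
  (forall t, u <= t <= v -> continuous f t) ->
  (forall t, u <= t <= v -> Rabs (f t) <= C * Rpower t s) ->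
  Rabs (RInt f u v) <= C * (Rpower v (s + 1) - Rpower u (s + 1)) / (s + 1).
Proof.
  intros Huv Hs Hf Hfle.
  assert (Hg : forall t, u <= t <= v -> continuous (fun t => C * Rpower t s) t).
  { intros t Ht. apply (continuous_mult (K := R_AbsRing)).
    - apply continuous_const.
    - apply continuous_Rpower. lra. }
  assert (Hint : is_RInt (fun t => C * Rpower t s) u v
                   (C * (Rpower v (s + 1) - Rpower u (s + 1)) / (s + 1))).
  { replace (C * (Rpower v (s + 1) - Rpower u (s + 1)) / (s + 1))
      with (minus (C * Rpower v (s + 1) / (s + 1)) (C * Rpower u (s + 1) / (s + 1)))
      by (unfold minus, plus, opp; cbn; field; exact Hs).
    apply (is_RInt_derive (V := R_CompleteNormedModule)
             (fun t => C * Rpower t (s + 1) / (s + 1)));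
      rewrite Rmin_left, Rmax_right by lra; intros t Ht; [|now apply Hg].
    auto_derive; [eexists; apply is_derive_Rpower; lra|].
    rewrite Derive_Rpower by lra. replace (s + 1 - 1) with s by ring. field. exact Hs. }
  assert (Hexf : ex_RInt f u v).
  { apply (ex_RInt_continuous (V := R_CompleteNormedModule)).
    rewrite Rmin_left, Rmax_right by lra. exact Hf. }
  eapply Rle_trans; [apply abs_RInt_le; [lra | exact Hexf]|].
  rewrite <- (is_RInt_unique _ _ _ _ Hint). apply RInt_le; try lra.
  - apply (ex_RInt_continuous (V := R_CompleteNormedModule)).
    rewrite Rmin_left, Rmax_right by lra.
    intros t Ht. now apply continuous_Rabs_comp, Hf.
  - now exists (C * (Rpower v (s + 1) - Rpower u (s + 1)) / (s + 1)).
  - intros t Ht. apply Hfle. lra.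
Qed.

Lemma abs_RInt_swap (f : R -> R) (u v : R) :
  (forall t, 0 < t -> continuous f t) -> 0 < u -> 0 < v ->
  Rabs (RInt f v u) = Rabs (RInt f u v).
Proof.
  intros Hf Hu Hv.
  rewrite <- (opp_RInt_swap (V := R_CompleteNormedModule)) by now apply ex_RInt_pos.
  apply Rabs_Ropp.
Qed.

Section PowerDominatedIntegral.

Variables (f : R -> R) (p q C0 C1 : R).
Hypothesis Hp : -1 < p.
Hypothesis Hq : q < -1.
Hypothesis Hf : forall t, 0 < t -> continuous f t.
Hypothesis Hf0 : forall t, 0 < t <= 1 -> Rabs (f t) <= C0 * Rpower t p.
Hypothesis Hf1 : forall t, 1 <= t -> Rabs (f t) <= C1 * Rpower t q.

Lemma abs_RInt_near_0_le (u v : R) : 0 < u <= 1 -> 0 < v <= 1 ->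
  Rabs (RInt f u v) <= C0 / (p + 1) * Rpower (Rmax u v) (p + 1).
Proof.
  assert (HC0 : 0 <= C0).
  { generalize (Hf0 1 ltac:(lra)) (Rabs_pos (f 1)). rewrite Rpower_1_base. lra. }
  assert (Hle : forall u v, 0 < u <= v -> v <= 1 ->
                  Rabs (RInt f u v) <= C0 / (p + 1) * Rpower v (p + 1)).
  { intros u' v' Huv Hv.
    eapply Rle_trans.
    { apply (abs_RInt_le_power f C0 p); [lra | intro; lra | |];
        intros t Ht; [apply Hf | apply Hf0]; lra. }
    replace (C0 * (Rpower v' (p + 1) - Rpower u' (p + 1)) / (p + 1))
      with (C0 / (p + 1) * (Rpower v' (p + 1) - Rpower u' (p + 1))) by (field; lra).
    apply Rmult_le_compat_l.
    - apply Rmult_le_pos; [exact HC0 | left; apply Rinv_0_lt_compat; lra].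
    - generalize (Rpower_gt_0 u' (p + 1)). lra. }
  intros Hu Hv. destruct (Rle_or_lt u v) as [Huv|Hvu].
  - rewrite Rmax_right by lra. apply Hle; lra.
  - rewrite <- (abs_RInt_swap f u v Hf), Rmax_left by lra. apply Hle; lra.
Qed.

Lemma abs_RInt_near_infty_le (u v : R) : 1 <= u -> 1 <= v ->
  Rabs (RInt f u v) <= C1 / (- q - 1) * Rpower (Rmin u v) (q + 1).
Proof.
  assert (HC1 : 0 <= C1).
  { generalize (Hf1 1 ltac:(lra)) (Rabs_pos (f 1)). rewrite Rpower_1_base. lra. }
  assert (Hle : forall u v, 1 <= u <= v ->
                  Rabs (RInt f u v) <= C1 / (- q - 1) * Rpower u (q + 1)).
  { intros u' v' Huv.
    eapply Rle_trans.
    { apply (abs_RInt_le_power f C1 q); [lra | intro; lra | |];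
        intros t Ht; [apply Hf | apply Hf1]; lra. }
    replace (C1 * (Rpower v' (q + 1) - Rpower u' (q + 1)) / (q + 1))
      with (C1 / (- q - 1) * (Rpower u' (q + 1) - Rpower v' (q + 1))) by (field; lra).
    apply Rmult_le_compat_l.
    - apply Rmult_le_pos; [exact HC1 | left; apply Rinv_0_lt_compat; lra].
    - generalize (Rpower_gt_0 v' (q + 1)). lra. }
  intros Hu Hv. destruct (Rle_or_lt u v) as [Huv|Hvu].
  - rewrite Rmin_left by lra. apply Hle; lra.
  - rewrite <- (abs_RInt_swap f u v Hf), Rmin_right by lra. apply Hle; lra.
Qed.

Lemma ex_RInt_gen_0_infty : ex_RInt_gen f (at_right 0) (Rbar_locally p_infty).
Proof.
  assert (Hlim : exists l, filterlim (fun ab => RInt f (fst ab) (snd ab)) ends_0_infty (locally l)).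
  { apply (filterlim_locally_cauchy (F := ends_0_infty)). intros eps.
    set (B0 := fun u => C0 / (p + 1) * Rpower u (p + 1)).
    set (B1 := fun v => C1 / (- q - 1) * Rpower v (q + 1)).
    assert (He : 0 < eps / 2) by (generalize (cond_pos eps); lra).
    assert (H0 : at_right 0 (fun u => 0 < u <= 1 /\ B0 u < eps / 2)).
    { apply filter_and.
      - exists (mkposreal 1 Rlt_0_1). intros u Hu Hu0.
        change (Rabs (u - 0) < 1) in Hu. apply Rabs_lt_between in Hu. lra.
      - apply filterlim_0_eventually_lt; [|exact He].
        apply filterlim_scal_0, filterlim_Rpower_at_right_0. lra. }
    assert (H1 : Rbar_locally p_infty (fun v => 1 <= v /\ B1 v < eps / 2)).
    { apply filter_and.
      - exists 1. intros v Hv. lra.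
      - apply filterlim_0_eventually_lt; [|exact He].
        apply filterlim_scal_0, filterlim_Rpower_p_infty. lra. }
    exists (fun ab => (0 < fst ab <= 1 /\ B0 (fst ab) < eps / 2) /\
                      (1 <= snd ab /\ B1 (snd ab) < eps / 2)).
    split; [exact (Filter_prod _ _ _ _ _ H0 H1 (fun u v Hu Hv => conj Hu Hv))|].
    intros [u1 u2] [v1 v2] [[Hu1 Bu1] [Hu2 Bu2]] [[Hv1 Bv1] [Hv2 Bv2]]. cbn in *.
    change (Rabs (RInt f v1 v2 - RInt f u1 u2) < eps).
    assert (Hex : forall a b, 0 < a -> 0 < b -> ex_RInt f a b) by (intros; now apply ex_RInt_pos).
    rewrite <- (RInt_Chasles (V := R_CompleteNormedModule) f v1 u2 v2),
            <- (RInt_Chasles (V := R_CompleteNormedModule) f v1 u1 u2) by (apply Hex; lra).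
    change (Rabs (RInt f v1 u1 + RInt f u1 u2 + RInt f u2 v2 - RInt f u1 u2) < eps).
    replace (RInt f v1 u1 + RInt f u1 u2 + RInt f u2 v2 - RInt f u1 u2)
      with (RInt f v1 u1 + RInt f u2 v2) by ring.
    eapply Rle_lt_trans; [apply Rabs_triang|].
    assert (Hnear0 : Rabs (RInt f v1 u1) < eps / 2).
    { eapply Rle_lt_trans; [apply abs_RInt_near_0_le; lra|].
      fold (B0 (Rmax v1 u1)). now apply Rmax_case. }
    assert (Hnear_infty : Rabs (RInt f u2 v2) < eps / 2).
    { eapply Rle_lt_trans; [apply abs_RInt_near_infty_le; lra|].
      fold (B1 (Rmin u2 v2)). now apply Rmin_case. }
    lra. }
  destruct Hlim as [l Hl]. exists l. now apply is_RInt_gen_0_infty_iff.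
Qed.

Lemma abs_RInt_gen_0_infty_le (l : R) :
  is_RInt_gen f (at_right 0) (Rbar_locally p_infty) l ->
  Rabs l <= C0 / (p + 1) + C1 / (- q - 1).
Proof.
  intros Hl. apply is_RInt_gen_0_infty_iff in Hl; [|exact Hf].
  apply (abs_le_of_filterlim _ _ _ Hl), ends_0_infty_intro.
  exists 1, 1. split; [lra|]. intros u v Hu Hv.
  change (Rabs (RInt f u v) <= C0 / (p + 1) + C1 / (- q - 1)).
  rewrite <- (RInt_Chasles (V := R_CompleteNormedModule) f u 1 v)
    by (apply ex_RInt_pos; [exact Hf | lra | lra]).
  eapply Rle_trans; [apply Rabs_triang|]. apply Rplus_le_compat.
  - eapply Rle_trans; [apply abs_RInt_near_0_le; lra|].
    rewrite Rmax_right, Rpower_1_base by lra. lra.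
  - eapply Rle_trans; [apply abs_RInt_near_infty_le; lra|].
    rewrite Rmin_left, Rpower_1_base by lra. lra.
Qed.

End PowerDominatedIntegral.

Lemma abs_is_RInt_gen_0_infty_le (f g : R -> R) (lf lg : R) :
  (forall t, 0 < t -> Rabs (f t) <= g t) ->
  is_RInt_gen f (at_right 0) (Rbar_locally p_infty) lf ->
  is_RInt_gen g (at_right 0) (Rbar_locally p_infty) lg ->
  Rabs lf <= lg.
Proof.
  intros Hfg Hf Hg. apply (RInt_gen_norm f g lf lg ends_0_infty_le); [|exact Hf | exact Hg].
  generalize ends_0_infty_pos. apply filter_imp. intros [u v] [Hu Hv] t Ht. apply Hfg. cbn in *. lra.
Qed.

(** * Laplace transforms *)

Definition Lap (psi : R -> R) (x : R) : R :=
  RInt_gen (fun t => exp (- x * t) * psi t) (at_right 0) (Rbar_locally p_infty).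

Definition power_dominated (psi : R -> R) (p : R) : Prop :=
  (forall t, 0 < t -> continuous psi t) /\ (forall t, 0 < t -> Rabs (psi t) <= Rpower t p).

Lemma power_dominated_mul_id (psi : R -> R) (p : R) :
  power_dominated psi p -> power_dominated (fun t => t * psi t) (p + 1).
Proof.
  intros [Hc Hb]. split.
  - intros t Ht. apply (continuous_mult (K := R_AbsRing)); [apply continuous_id | now apply Hc].
  - intros t Ht. rewrite Rpower_plus_1, Rabs_mult, (Rabs_pos_eq t), Rmult_comm by lra.
    apply Rmult_le_compat_r; [lra | now apply Hb].
Qed.

Lemma power_dominated_Rpower (p : R) : power_dominated (fun t => Rpower t p) p.
Proof.
  split; intros t Ht; [now apply continuous_Rpower|].
  rewrite Rabs_pos_eq; [lra | left; apply Rpower_gt_0].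
Qed.

Lemma power_dominated_sqr_abs (psi : R -> R) (p : R) :
  power_dominated psi p -> power_dominated (fun t => t ^ 2 * Rabs (psi t)) (p + 2).
Proof.
  intros [Hc Hb]. split.
  - intros t Ht. apply (continuous_mult (K := R_AbsRing)).
    + refine (ex_derive_continuous _ _ _). auto_derive. exact I.
    + now apply continuous_Rabs_comp, Hc.
  - intros t Ht.
    rewrite Rabs_mult, Rabs_Rabsolu, (Rabs_pos_eq (t ^ 2)) by (apply pow_le; lra).
    rewrite Rpower_plus, (Rmult_comm (Rpower t p)).
    replace (Rpower t 2) with (t ^ 2)
      by (replace 2 with (INR 2) by (cbn; ring); now rewrite Rpower_pow).
    apply Rmult_le_compat_l; [apply pow_le; lra | now apply Hb].
Qed.

Lemma continuous_exp_mul (x : R) (psi : R -> R) (t : R) :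
  continuous psi t -> continuous (fun t => exp (- x * t) * psi t) t.
Proof.
  intros Hpsi. apply (continuous_mult (K := R_AbsRing)); [|exact Hpsi].
  refine (ex_derive_continuous _ _ _). auto_derive. exact I.
Qed.

Lemma is_RInt_gen_Lap (psi : R -> R) (p x : R) : -1 < p -> 0 < x -> power_dominated psi p ->
  is_RInt_gen (fun t => exp (- x * t) * psi t) (at_right 0) (Rbar_locally p_infty) (Lap psi x).
Proof.
  intros Hp Hx [Hc Hb].
  destruct (Rpower_mul_exp_bounded (p + 2) x Hx) as [K [HK HKb]].
  apply (RInt_gen_correct (V := R_CompleteNormedModule)).
  apply (ex_RInt_gen_0_infty _ p (-2) 1 K); try lra.
  - intros t Ht. now apply continuous_exp_mul, Hc.
  - intros t Ht. rewrite Rabs_mult, Rabs_pos_eq by (left; apply exp_pos).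
    apply Rmult_le_compat; [left; apply exp_pos | apply Rabs_pos | |].
    + apply exp_neg_mult_le_1; lra.
    + apply Hb. lra.
  - intros t Ht. rewrite Rabs_mult, Rabs_pos_eq by (left; apply exp_pos).
    apply Rle_trans with (exp (- x * t) * Rpower t p).
    + apply Rmult_le_compat_l; [left; apply exp_pos | apply Hb; lra].
    + replace (Rpower t p) with (Rpower t (p + 2 + -2)) by (f_equal; ring). rewrite Rpower_plus.
      replace (exp (- x * t) * (Rpower t (p + 2) * Rpower t (-2)))
        with ((Rpower t (p + 2) * exp (- x * t)) * Rpower t (-2)) by ring.
      apply Rmult_le_compat_r; [left; apply Rpower_gt_0 | now apply HKb].
Qed.

Lemma is_derive_Lap (psi : R -> R) (p x : R) : -1 < p -> 0 < x -> power_dominated psi p ->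
  is_derive (Lap psi) x (- Lap (fun t => t * psi t) x).
Proof.
  intros Hp Hx Hpsi.
  set (g := fun t => t ^ 2 * Rabs (psi t)).
  assert (HB : is_RInt_gen (fun t => exp (- (x / 2) * t) * g t)
                 (at_right 0) (Rbar_locally p_infty) (Lap g (x / 2))).
  { apply (is_RInt_gen_Lap g (p + 2)); [lra | lra | now apply power_dominated_sqr_abs]. }
  apply (is_derive_of_diff_quotient_le _ _ _ (Lap g (x / 2)) (x / 2)); [lra|].
  intros h Hh0 Hhx.
  assert (Hxh : 0 < x + h) by (apply Rabs_lt_between in Hhx; lra).
  (* The difference quotient of [Lap psi] plus [Lap (t psi)] is itself a Laplace integral,
     whose integrand is controlled pointwise by [exp_diff_quotient_le]. *)
  assert (Hdiff : is_RInt_gen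
    (fun t => / h * (exp (- (x + h) * t) * psi t - exp (- x * t) * psi t)
              + exp (- x * t) * (t * psi t))
    (at_right 0) (Rbar_locally p_infty)
    (/ h * (Lap psi (x + h) - Lap psi x) + Lap (fun t => t * psi t) x)).
  { apply (is_RInt_gen_plus (V := R_NormedModule)).
    - apply (is_RInt_gen_scal (V := R_NormedModule)), (is_RInt_gen_minus (V := R_NormedModule));
        apply (is_RInt_gen_Lap psi p); assumption.
    - apply (is_RInt_gen_Lap _ (p + 1)); [lra | exact Hx | now apply power_dominated_mul_id]. }
  replace ((Lap psi (x + h) - Lap psi x) / h - - Lap (fun t => t * psi t) x)
    with (/ h * (Lap psi (x + h) - Lap psi x) + Lap (fun t => t * psi t) x)
    by (field; exact Hh0).
  refine (abs_is_RInt_gen_0_infty_le _ _ _ _ _ Hdiff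
            (is_RInt_gen_scal (V := R_NormedModule) _ (Rabs h) _ HB)).
  intros t Ht. cbv beta.
  change (scal (Rabs h) (exp (- (x / 2) * t) * g t)) with (Rabs h * (exp (- (x / 2) * t) * g t)).
  replace (/ h * (exp (- (x + h) * t) * psi t - exp (- x * t) * psi t)
           + exp (- x * t) * (t * psi t))
    with (psi t * ((exp (- (x + h) * t) - exp (- x * t)) / h + t * exp (- x * t)))
    by (field; exact Hh0).
  rewrite Rabs_mult. unfold g.
  replace (Rabs h * (exp (- (x / 2) * t) * (t ^ 2 * Rabs (psi t))))
    with (Rabs (psi t) * (Rabs h * (t ^ 2 * exp (- (x / 2) * t)))) by ring.
  apply Rmult_le_compat_l; [apply Rabs_pos | now apply exp_diff_quotient_le].
Qed.

Lemma is_RInt_gen_Gamma_pos (s : R) : 0 < s ->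
  is_RInt_gen (fun t => Rpower t (s - 1) * exp (- t)) (at_right 0) (Rbar_locally p_infty)
    (Gamma_pos s).
Proof.
  intros Hs. apply (RInt_gen_correct (V := R_CompleteNormedModule)).
  apply (ex_RInt_gen_ext_eq (V := R_CompleteNormedModule)
           (fun t => exp (- (1) * t) * Rpower t (s - 1))).
  - intros t. rewrite Rmult_comm. f_equal. f_equal. ring.
  - eexists. apply (is_RInt_gen_Lap _ (s - 1)); [lra | lra | apply power_dominated_Rpower].
Qed.

Lemma is_RInt_gen_exp_mul_Rpower (s x : R) : 0 < s -> 0 < x ->
  is_RInt_gen (fun t => exp (- x * t) * Rpower t (s - 1)) (at_right 0) (Rbar_locally p_infty)
    (Rpower x (- s) * Gamma_pos s).
Proof.
  intros Hs Hx.
  assert (Hc : forall t, 0 < t -> continuous (fun t => Rpower t (s - 1) * exp (- t)) t).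
  { intros t Ht. apply (continuous_mult (K := R_AbsRing)); [now apply continuous_Rpower|].
    refine (ex_derive_continuous _ _ _). auto_derive. exact I. }
  assert (HG := is_RInt_gen_0_infty_scale _ x _ Hx Hc (is_RInt_gen_Gamma_pos s Hs)).
  apply (is_RInt_gen_ext (fun t => Rpower x (- s) * (x * (Rpower (x * t) (s - 1) * exp (- (x * t)))))).
  - generalize ends_0_infty_pos. apply filter_imp. intros [u v] [Hu Hv] t Ht. simpl in *.
    assert (Htpos : 0 < t) by (generalize (Rmin_glb_lt u v 0 Hu Hv); lra).
    rewrite <- Rpower_mult_distr by lra.
    replace (- (x * t)) with (- x * t) by ring.
    replace (Rpower x (- s) * (x * (Rpower x (s - 1) * Rpower t (s - 1) * exp (- x * t))))
      with ((Rpower x (- s) * Rpower x 1 * Rpower x (s - 1)) * (exp (- x * t) * Rpower t (s - 1)))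
      by (rewrite Rpower_1 by lra; ring).
    rewrite <- !Rpower_plus. replace (- s + 1 + (s - 1)) with 0 by ring.
    rewrite Rpower_O by lra. ring.
  - exact (is_RInt_gen_scal (V := R_NormedModule) _ _ _ HG).
Qed.

Lemma Gamma_opp_inv (N : R) : 1 < N -> Gamma (- (1 / N)) = - N * Gamma_pos (1 - 1 / N).
Proof.
  intros HN. unfold Gamma. rewrite Ropp_involutive.
  assert (Hinv : 0 < 1 / N < 1).
  { split; [apply Rdiv_lt_0_compat; lra|].
    apply Rmult_lt_reg_r with N; [lra|]. unfold Rdiv. rewrite Rmult_assoc, Rinv_l; lra. }
  replace (up (1 / N)) with 1%Z by (apply tech_up; cbn; lra).
  change (Z.to_nat 1) with 1%nat. cbn [poch INR].
  replace (- (1 / N) + 1) with (1 - 1 / N) by ring.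
  field. lra.
Qed.

(** * The Tricomi kernel *)

Definition tricomi_kernel (a b t : R) : R := Rpower t (a - 1) * Rpower (1 + t) (b - 1).

Lemma kummerT_Lap (b a y : R) :
  kummerT b a y = exp y / Gamma (a - b) * Lap (tricomi_kernel (a - b) b) (- y).
Proof.
  unfold kummerT, Lap, tricomi_kernel. do 2 f_equal.
  apply functional_extensionality. intros t. rewrite Ropp_involutive. ring.
Qed.

Definition tricomi_boundary (a b x t : R) : R :=
  exp (- x * t) * Rpower t a * Rpower (1 + t) b.

Section TricomiKernel.

Variables a b : R.
Hypothesis Ha : 0 < a.
Hypothesis Hb : b <= 0.

Lemma tricomi_kernel_dominated : power_dominated (tricomi_kernel a b) (a - 1).
Proof.
  split; intros t Ht; unfold tricomi_kernel.
  - apply (continuous_mult (K := R_AbsRing)); [now apply continuous_Rpower|].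
    apply (continuous_comp (fun t => 1 + t) (fun s => Rpower s (b - 1))).
    + refine (ex_derive_continuous _ _ _). auto_derive. exact I.
    + apply continuous_Rpower. lra.
  - rewrite Rabs_pos_eq by (apply Rmult_le_pos; left; apply Rpower_gt_0).
    rewrite <- (Rmult_1_r (Rpower t (a - 1))) at 2.
    apply Rmult_le_compat_l; [left; apply Rpower_gt_0 | apply Rpower_le_1_base_ge_1; lra].
Qed.

Lemma tricomi_kernel_mul_id_dominated :
  power_dominated (fun t => t * tricomi_kernel a b t) a.
Proof.
  assert (H := power_dominated_mul_id _ _ tricomi_kernel_dominated).
  now replace (a - 1 + 1) with a in H by ring.
Qed.

Lemma is_derive_Lap_tricomi (x : R) : 0 < x ->
  is_derive (Lap (tricomi_kernel a b)) x (- Lap (fun t => t * tricomi_kernel a b t) x).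
Proof.
  intros Hx. apply (is_derive_Lap _ (a - 1)); [lra | exact Hx | apply tricomi_kernel_dominated].
Qed.

Lemma is_derive_Lap_tricomi_mul_id (x : R) : 0 < x ->
  is_derive (Lap (fun t => t * tricomi_kernel a b t)) x
    (- Lap (fun t => t * (t * tricomi_kernel a b t)) x).
Proof.
  intros Hx. apply (is_derive_Lap _ a); [lra | exact Hx | apply tricomi_kernel_mul_id_dominated].
Qed.

Lemma is_derive_tricomi_boundary (x t : R) : 0 < t ->
  is_derive (tricomi_boundary a b x) t
    (a * (exp (- x * t) * tricomi_kernel a b t)
     + (a + b - x) * (exp (- x * t) * (t * tricomi_kernel a b t))
     - x * (exp (- x * t) * (t * (t * tricomi_kernel a b t)))).
Proof.
  intros Ht. unfold tricomi_boundary, tricomi_kernel. auto_derive.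
  - repeat split; eexists; apply is_derive_Rpower; lra.
  - rewrite !Derive_Rpower by lra.
    replace (Rpower t a) with (Rpower t (a - 1) * t)
      by (rewrite <- Rpower_plus_1 by lra; f_equal; ring).
    replace (Rpower (1 + t) b) with (Rpower (1 + t) (b - 1) * (1 + t))
      by (rewrite <- Rpower_plus_1 by lra; f_equal; ring).
    ring.
Qed.

Lemma abs_tricomi_boundary_le (x t : R) : 0 < t ->
  Rabs (tricomi_boundary a b x t) <= exp (- x * t) * Rpower t a.
Proof.
  intros Ht. unfold tricomi_boundary.
  assert (Hpos : 0 <= exp (- x * t) * Rpower t a)
    by (apply Rmult_le_pos; left; [apply exp_pos | apply Rpower_gt_0]).
  rewrite Rabs_pos_eq by (apply Rmult_le_pos; [exact Hpos | left; apply Rpower_gt_0]).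
  rewrite <- (Rmult_1_r (exp (- x * t) * Rpower t a)) at 2.
  apply Rmult_le_compat_l; [exact Hpos | apply Rpower_le_1_base_ge_1; lra].
Qed.

Lemma filterlim_tricomi_boundary_at_right_0 (x : R) : 0 < x ->
  filterlim (tricomi_boundary a b x) (at_right 0) (locally 0).
Proof.
  intros Hx.
  apply filterlim_0_abs_le with (fun t => Rpower t a); [|now apply filterlim_Rpower_at_right_0].
  exists (mkposreal 1 Rlt_0_1). intros t _ Ht.
  eapply Rle_trans; [now apply abs_tricomi_boundary_le|].
  rewrite <- (Rmult_1_l (Rpower t a)) at 2.
  apply Rmult_le_compat_r; [left; apply Rpower_gt_0 | apply exp_neg_mult_le_1; lra].
Qed.

Lemma filterlim_tricomi_boundary_p_infty (x : R) : 0 < x ->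
  filterlim (tricomi_boundary a b x) (Rbar_locally p_infty) (locally 0).
Proof.
  intros Hx. destruct (Rpower_mul_exp_bounded (a + 1) x Hx) as [K [HK HKb]].
  apply filterlim_0_abs_le with (fun t => K * Rpower t (-1));
    [|apply filterlim_scal_0, filterlim_Rpower_p_infty; lra].
  exists 1. intros t Ht.
  eapply Rle_trans; [apply abs_tricomi_boundary_le; lra|].
  replace (Rpower t a) with (Rpower t (a + 1) * Rpower t (-1))
    by (rewrite <- Rpower_plus; f_equal; ring).
  replace (exp (- x * t) * (Rpower t (a + 1) * Rpower t (-1)))
    with (Rpower t (a + 1) * exp (- x * t) * Rpower t (-1)) by ring.
  apply Rmult_le_compat_r; [left; apply Rpower_gt_0 | apply HKb; lra].
Qed.

Lemma Lap_tricomi_recurrence (x : R) : 0 < x ->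
  x * Lap (fun t => t * (t * tricomi_kernel a b t)) x
  - (a + b - x) * Lap (fun t => t * tricomi_kernel a b t) x
  - a * Lap (tricomi_kernel a b) x = 0.
Proof.
  intros Hx.
  destruct tricomi_kernel_dominated as [Hk0 _].
  destruct tricomi_kernel_mul_id_dominated as [Hk1 _].
  destruct (power_dominated_mul_id _ _ tricomi_kernel_mul_id_dominated) as [Hk2 _].
  set (h := fun t => a * (exp (- x * t) * tricomi_kernel a b t)
                     + (a + b - x) * (exp (- x * t) * (t * tricomi_kernel a b t))
                     - x * (exp (- x * t) * (t * (t * tricomi_kernel a b t)))).
  (* integration by parts: the boundary term vanishes at both ends *)
  assert (Hzero : is_RInt_gen h (at_right 0) (Rbar_locally p_infty) (0 - 0)).
  { apply (is_RInt_gen_0_infty_derive (tricomi_boundary a b x)).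
    - exact (is_derive_tricomi_boundary x).
    - intros t Ht. unfold h.
      apply (continuous_minus (V := R_NormedModule)); [apply (continuous_plus (V := R_NormedModule))|];
        apply (continuous_mult (K := R_AbsRing)); try apply continuous_const;
        apply continuous_exp_mul; auto.
    - now apply filterlim_tricomi_boundary_at_right_0.
    - now apply filterlim_tricomi_boundary_p_infty. }
  assert (Hcomb : is_RInt_gen h (at_right 0) (Rbar_locally p_infty)
    (a * Lap (tricomi_kernel a b) x + (a + b - x) * Lap (fun t => t * tricomi_kernel a b t) x
     - x * Lap (fun t => t * (t * tricomi_kernel a b t)) x)).
  { apply (is_RInt_gen_minus (V := R_NormedModule)); [apply (is_RInt_gen_plus (V := R_NormedModule))|];
      apply (is_RInt_gen_scal (V := R_NormedModule)).
    - apply (is_RInt_gen_Lap _ (a - 1)); [lra | exact Hx | apply tricomi_kernel_dominated].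
    - apply (is_RInt_gen_Lap _ a); [lra | exact Hx | apply tricomi_kernel_mul_id_dominated].
    - apply (is_RInt_gen_Lap _ (a + 1)); [lra | exact Hx |].
      apply power_dominated_mul_id, tricomi_kernel_mul_id_dominated. }
  apply (is_RInt_gen_unique (V := R_CompleteNormedModule)) in Hzero, Hcomb.
  lra.
Qed.

Hypothesis Hab : 0 < a + b < 1.

Lemma abs_Lap_tricomi_le (x : R) : 0 < x ->
  Rabs (Lap (tricomi_kernel a b) x) <= 1 / a + 1 / (1 - (a + b)).
Proof.
  intros Hx. destruct tricomi_kernel_dominated as [Hk Hkb].
  replace (1 / a + 1 / (1 - (a + b))) with (1 / (a - 1 + 1) + 1 / (- (a + b - 2) - 1))
    by (f_equal; f_equal; ring).
  apply (abs_RInt_gen_0_infty_le (fun t => exp (- x * t) * tricomi_kernel a b t));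
    [lra | lra | intros t Ht; now apply continuous_exp_mul, Hk | | |].
  - intros t Ht. rewrite Rabs_mult, Rabs_pos_eq, Rmult_1_l by (left; apply exp_pos).
    rewrite <- (Rmult_1_l (Rpower t (a - 1))).
    apply Rmult_le_compat; [left; apply exp_pos | apply Rabs_pos | |].
    + apply exp_neg_mult_le_1; lra.
    + apply Hkb; lra.
  - intros t Ht. rewrite Rabs_mult, Rabs_pos_eq, Rmult_1_l by (left; apply exp_pos).
    rewrite <- (Rmult_1_l (Rpower t (a + b - 2))).
    apply Rmult_le_compat; [left; apply exp_pos | apply Rabs_pos | apply exp_neg_mult_le_1; lra|].
    unfold tricomi_kernel. rewrite Rabs_pos_eq by (apply Rmult_le_pos; left; apply Rpower_gt_0).
    replace (a + b - 2) with ((a - 1) + (b - 1)) by ring. rewrite Rpower_plus.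
    apply Rmult_le_compat_l; [left; apply Rpower_gt_0 | apply Rpower_le_l_nonpos; lra].
  - now apply is_RInt_gen_Lap with (a - 1); [lra | | apply tricomi_kernel_dominated].
Qed.

Lemma abs_exp_mul_Rpower_sub_tricomi_le (x t : R) : 0 < x -> 0 < t ->
  Rabs (exp (- x * t) * Rpower t (a + b - 1) - exp (- x * t) * (t * tricomi_kernel a b t))
  <= Rpower t a * (Rpower t (b - 1) - Rpower (1 + t) (b - 1)).
Proof.
  intros Hx Ht.
  replace (exp (- x * t) * Rpower t (a + b - 1) - exp (- x * t) * (t * tricomi_kernel a b t))
    with (exp (- x * t) * (Rpower t a * (Rpower t (b - 1) - Rpower (1 + t) (b - 1)))).
  - destruct (Rpower_sub_Rpower_succ_le (b - 1) t ltac:(lra) Ht) as [Hdiff _].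
    assert (Hpos : 0 <= Rpower t a * (Rpower t (b - 1) - Rpower (1 + t) (b - 1)))
      by (apply Rmult_le_pos; [left; apply Rpower_gt_0 | exact Hdiff]).
    rewrite Rabs_mult, Rabs_pos_eq, (Rabs_pos_eq _ Hpos) by (left; apply exp_pos).
    rewrite <- (Rmult_1_l (Rpower t a * _)) at 2.
    apply Rmult_le_compat_r; [exact Hpos | apply exp_neg_mult_le_1; lra].
  - unfold tricomi_kernel.
    replace (a + b - 1) with (a + (b - 1)) by ring. rewrite Rpower_plus.
    replace (Rpower t a) with (Rpower t (a - 1) * t)
      by (rewrite <- Rpower_plus_1 by lra; f_equal; ring).
    ring.
Qed.

Lemma abs_Gamma_sub_Lap_tricomi_mul_id_le (x : R) : 0 < x ->
  Rabs (Rpower x (- (a + b)) * Gamma_pos (a + b) - Lap (fun t => t * tricomi_kernel a b t) x)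
  <= 1 / (a + b) + (1 - b) / (1 - (a + b)).
Proof.
  intros Hx.
  replace (1 / (a + b) + (1 - b) / (1 - (a + b)))
    with (1 / (a + b - 1 + 1) + (1 - b) / (- (a + b - 2) - 1)) by (f_equal; f_equal; ring).
  apply (abs_RInt_gen_0_infty_le
           (fun t => exp (- x * t) * Rpower t (a + b - 1)
                     - exp (- x * t) * (t * tricomi_kernel a b t)));
    [lra | lra | | | |].
  - intros t Ht. apply (continuous_minus (V := R_NormedModule));
      apply continuous_exp_mul; [now apply continuous_Rpower|].
    now apply tricomi_kernel_mul_id_dominated.
  - intros t Ht. eapply Rle_trans; [apply abs_exp_mul_Rpower_sub_tricomi_le; lra|].
    replace (1 * Rpower t (a + b - 1)) with (Rpower t a * Rpower t (b - 1))
      by (rewrite Rmult_1_l, <- Rpower_plus; f_equal; ring).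
    apply Rmult_le_compat_l; [left; apply Rpower_gt_0|].
    generalize (Rpower_gt_0 (1 + t) (b - 1)). lra.
  - intros t Ht. eapply Rle_trans; [apply abs_exp_mul_Rpower_sub_tricomi_le; lra|].
    replace ((1 - b) * Rpower t (a + b - 2)) with (Rpower t a * (- (b - 1) * Rpower t (b - 1 - 1)))
      by (replace (a + b - 2) with (a + (b - 1 - 1)) by ring; rewrite Rpower_plus; ring).
    apply Rmult_le_compat_l; [left; apply Rpower_gt_0|].
    apply Rpower_sub_Rpower_succ_le; lra.
  - apply (is_RInt_gen_minus (V := R_NormedModule)).
    + apply is_RInt_gen_exp_mul_Rpower; lra.
    + apply (is_RInt_gen_Lap _ a); [lra | exact Hx | apply tricomi_kernel_mul_id_dominated].
Qed.

Lemma filterlim_Rpower_mul_Lap_tricomi :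
  filterlim (fun x => Rpower x (a + b) * Lap (tricomi_kernel a b) x) (at_right 0) (locally 0).
Proof.
  apply filterlim_Rpower_mul_bounded with (1 / a + 1 / (1 - (a + b))); [lra|].
  exact abs_Lap_tricomi_le.
Qed.

Lemma filterlim_Rpower_mul_Lap_tricomi_mul_id :
  filterlim (fun x => Rpower x (a + b) * Lap (fun t => t * tricomi_kernel a b t) x)
    (at_right 0) (locally (Gamma_pos (a + b))).
Proof.
  set (D := fun x => Rpower x (- (a + b)) * Gamma_pos (a + b)
                     - Lap (fun t => t * tricomi_kernel a b t) x).
  apply filterlim_ext_loc with (fun x => Gamma_pos (a + b) - Rpower x (a + b) * D x).
  - exists (mkposreal 1 Rlt_0_1). intros x _ Hx. unfold D.
    rewrite Rmult_minus_distr_l, <- Rmult_assoc, <- Rpower_plus, Rplus_opp_r, Rpower_O by exact Hx.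
    ring.
  - assert (HD : filterlim (fun x => Rpower x (a + b) * D x) (at_right 0) (locally 0)).
    { apply filterlim_Rpower_mul_bounded with (1 / (a + b) + (1 - b) / (1 - (a + b))); [lra|].
      exact abs_Gamma_sub_Lap_tricomi_mul_id_le. }
    generalize (filterlim_Rminus _ _ _ _ (filterlim_const (Gamma_pos (a + b))) HD).
    now rewrite Rminus_0_r.
Qed.

End TricomiKernel.

(** * Kummer's series *)

Definition kummer_coef (a b : R) (k : nat) : R := poch b k / poch a k / INR (fact k).

Definition kummerM' (b a y : R) : R := PSeries (PS_derive (kummer_coef a b)) y.
Definition kummerM'' (b a y : R) : R := PSeries (PS_derive (PS_derive (kummer_coef a b))) y.

Lemma kummerM_PSeries (b a y : R) : kummerM b a y = PSeries (kummer_coef a b) y.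
Proof. unfold kummerM, PSeries. apply Series_ext. intros k. unfold kummer_coef, Rdiv. ring. Qed.

Lemma poch_gt_0 (x : R) (k : nat) : 0 < x -> 0 < poch x k.
Proof.
  intros Hx. induction k as [|k IHk]; cbn; [lra|].
  apply Rmult_lt_0_compat; [exact IHk | generalize (pos_INR k); lra].
Qed.

Section KummerSeries.

Variables a b : R.
Hypothesis Ha : 0 < a.

Lemma kummer_coef_succ (k : nat) :
  kummer_coef a b (S k) * (INR (S k) * (a + INR k)) = kummer_coef a b k * (b + INR k).
Proof.
  unfold kummer_coef. cbn [poch]. rewrite fact_simpl, mult_INR.
  assert (0 < poch a k) by now apply poch_gt_0.
  assert (INR (fact k) <> 0) by apply INR_fact_neq_0.
  assert (0 < a + INR k) by (generalize (pos_INR k); lra).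
  assert (INR (S k) <> 0) by (apply not_0_INR; lia).
  field. repeat split; lra.
Qed.

Lemma abs_kummer_coef_le (k : nat) :
  Rabs (kummer_coef a b k) <= Rmax 1 (Rabs b / a) ^ k / INR (fact k).
Proof.
  set (c := Rmax 1 (Rabs b / a)).
  assert (Hc1 : 1 <= c) by apply Rmax_l.
  assert (Hbc : Rabs b <= c * a).
  { apply Rmult_le_reg_r with (/ a); [now apply Rinv_0_lt_compat|].
    rewrite Rmult_assoc, Rinv_r, Rmult_1_r by lra. apply Rmax_r. }
  induction k as [|k IHk].
  - unfold kummer_coef. cbn. rewrite Rabs_pos_eq; lra.
  - assert (Hk : 0 < INR (S k)) by (apply lt_0_INR; lia).
    assert (Hak : 0 < a + INR k) by (generalize (pos_INR k); lra).
    assert (Hfact : 0 < INR (fact k)) by apply INR_fact_lt_0.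
    replace (kummer_coef a b (S k))
      with (kummer_coef a b k * (b + INR k) / (INR (S k) * (a + INR k)))
      by (rewrite <- kummer_coef_succ; field; lra).
    assert (Hnum : Rabs (b + INR k) <= c * (a + INR k)).
    { eapply Rle_trans; [apply Rabs_triang|].
      rewrite (Rabs_pos_eq (INR k)) by apply pos_INR. generalize (pos_INR k). nra. }
    unfold Rdiv at 1. rewrite !Rabs_mult, Rabs_inv, (Rabs_pos_eq (INR (S k) * _)) by nra.
    rewrite fact_simpl, mult_INR. cbn [pow].
    apply Rle_trans with (c ^ k / INR (fact k) * (c * (a + INR k)) * / (INR (S k) * (a + INR k))).
    + apply Rmult_le_compat_r; [left; apply Rinv_0_lt_compat; nra|].
      apply Rmult_le_compat; auto using Rabs_pos.
    + right. field. lra.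
Qed.

Lemma CV_radius_kummer_coef : CV_radius (kummer_coef a b) = p_infty.
Proof.
  set (c := Rmax 1 (Rabs b / a)).
  assert (Hc1 : 1 <= c) by apply Rmax_l.
  assert (Hle : forall r, 0 <= r -> Rbar_le r (CV_radius (kummer_coef a b))).
  { intros r Hr. apply (proj1 (CV_radius_bounded _)). exists (exp (c * r)). intros n.
    rewrite Rabs_mult, <- RPow_abs, (Rabs_pos_eq r) by exact Hr.
    apply Rle_trans with ((c * r) ^ n / INR (fact n)).
    - rewrite Rpow_mult_distr. unfold Rdiv. rewrite Rmult_assoc, (Rmult_comm (r ^ n)), <- Rmult_assoc.
      apply Rmult_le_compat_r; [now apply pow_le | apply abs_kummer_coef_le].
    - eapply Rle_trans; [|apply (exp_ge_taylor (c * r) n); nra].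
      destruct n as [|n]; cbn [sum_f_R0]; [lra|].
      assert (0 <= sum_f_R0 (fun i => (c * r) ^ i / INR (fact i)) n).
      { apply cond_pos_sum. intros i. apply Rmult_le_pos; [apply pow_le; nra|].
        left; apply Rinv_0_lt_compat, INR_fact_lt_0. }
      lra. }
  destruct (CV_radius (kummer_coef a b)) as [ρ| |] eqn:Hρ; [exfalso| reflexivity | exfalso].
  - generalize (Hle (Rabs ρ + 1) ltac:(generalize (Rabs_pos ρ); lra)). cbn.
    generalize (Rle_abs ρ). lra.
  - generalize (Hle 0 (Rle_refl 0)). easy.
Qed.

Lemma is_derive_kummerM (y : R) : is_derive (kummerM b a) y (kummerM' b a y).
Proof.
  apply (is_derive_ext (PSeries (kummer_coef a b))); [intros t; now rewrite kummerM_PSeries|].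
  apply is_derive_PSeries. now rewrite CV_radius_kummer_coef.
Qed.

Lemma is_derive_kummerM' (y : R) : is_derive (kummerM' b a) y (kummerM'' b a y).
Proof.
  apply is_derive_PSeries. now rewrite CV_radius_derive, CV_radius_kummer_coef.
Qed.

Lemma kummerM_0 : kummerM b a 0 = 1.
Proof. rewrite kummerM_PSeries, PSeries_0. unfold kummer_coef. cbn. field. Qed.

Lemma kummerM_ode (y : R) :
  y * kummerM'' b a y + (a - y) * kummerM' b a y - b * kummerM b a y = 0.
Proof.
  rewrite kummerM_PSeries. unfold kummerM'', kummerM'.
  assert (Hc : forall d, CV_radius d = p_infty -> ex_pseries d y).
  { intros d Hd. apply CV_radius_inside. now rewrite Hd. }
  assert (E0 : ex_pseries (kummer_coef a b) y) by now apply Hc, CV_radius_kummer_coef.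
  assert (E1 : ex_pseries (PS_derive (kummer_coef a b)) y)
    by (apply Hc; now rewrite CV_radius_derive, CV_radius_kummer_coef).
  assert (E2 : ex_pseries (PS_derive (PS_derive (kummer_coef a b))) y)
    by (apply Hc; now rewrite !CV_radius_derive, CV_radius_kummer_coef).
  set (c := kummer_coef a b) in *. set (c1 := PS_derive c) in *. set (c2 := PS_derive c1) in *.
  transitivity (PSeries (PS_minus (PS_minus (PS_plus (PS_incr_1 c2) (PS_scal a c1))
                                            (PS_incr_1 c1)) (PS_scal b c)) y).
  - assert (X1 : ex_pseries (PS_incr_1 c2) y) by (apply ex_pseries_incr_1; exact E2).
    assert (X2 : ex_pseries (PS_scal a c1) y) by (apply ex_pseries_scal; [apply Rmult_comm | exact E1]).
    assert (X3 : ex_pseries (PS_incr_1 c1) y) by (apply ex_pseries_incr_1; exact E1).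
    assert (X4 : ex_pseries (PS_scal b c) y) by (apply ex_pseries_scal; [apply Rmult_comm | exact E0]).
    assert (X5 : ex_pseries (PS_plus (PS_incr_1 c2) (PS_scal a c1)) y)
      by (apply ex_pseries_plus; assumption).
    assert (X6 : ex_pseries (PS_minus (PS_plus (PS_incr_1 c2) (PS_scal a c1)) (PS_incr_1 c1)) y)
      by (apply ex_pseries_plus; [exact X5 | apply ex_pseries_opp; exact X3]).
    rewrite PSeries_minus, PSeries_minus, PSeries_plus, !PSeries_incr_1, !PSeries_scal by assumption.
    change (y * PSeries c2 y + (a - y) * PSeries c1 y - b * PSeries c y
            = y * PSeries c2 y + a * PSeries c1 y - y * PSeries c1 y - b * PSeries c y). ring.
  - rewrite <- (PSeries_const_0 y). apply PSeries_ext. intros [|n];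
      unfold PS_minus, PS_plus, PS_scal, c2, c1, PS_derive; cbn [PS_incr_1].
    + assert (Hr := kummer_coef_succ 0). fold c in Hr. cbn [INR] in *.
      change (0 + a * (1 * c 1%nat) + - 0 + - (b * c 0%nat) = 0). lra.
    + assert (Hr := kummer_coef_succ (S n)). fold c in Hr.
      change (INR (S n) * (INR (S (S n)) * c (S (S n))) + a * (INR (S (S n)) * c (S (S n)))
              + - (INR (S n) * c (S n)) + - (b * c (S n)) = 0).
      transitivity (c (S (S n)) * (INR (S (S n)) * (a + INR (S n))) - c (S n) * (b + INR (S n)));
        [ring | rewrite Hr; ring].
Qed.

End KummerSeries.

(** * Abel's identity and the Kummer Wronskian *)

Section AbelIdentity.

Variables (p q : R) (u v du dv d2u d2v : R -> R).
Hypothesis Hu : forall x, 0 < x -> is_derive u x (du x).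
Hypothesis Hv : forall x, 0 < x -> is_derive v x (dv x).
Hypothesis Hdu : forall x, 0 < x -> is_derive du x (d2u x).
Hypothesis Hdv : forall x, 0 < x -> is_derive dv x (d2v x).
Hypothesis Hu_ode : forall x, 0 < x -> x * d2u x + (p + x) * du x + q * u x = 0.
Hypothesis Hv_ode : forall x, 0 < x -> x * d2v x + (p + x) * dv x + q * v x = 0.

Definition scaled_wronskian (x : R) : R := Rpower x p * exp x * (u x * dv x - du x * v x).

Lemma is_derive_scaled_wronskian (x : R) : 0 < x -> is_derive scaled_wronskian x 0.
Proof.
  intros Hx. unfold scaled_wronskian. auto_derive.
  - repeat split; eexists;
      [apply is_derive_Rpower | apply Hu | apply Hdv | apply Hdu | apply Hv]; exact Hx.
  - rewrite Derive_Rpower by exact Hx.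
    replace (Derive (fun x => u x) x) with (du x) by (symmetry; now apply is_derive_unique, Hu).
    replace (Derive (fun x => v x) x) with (dv x) by (symmetry; now apply is_derive_unique, Hv).
    replace (Derive (fun x => du x) x) with (d2u x) by (symmetry; now apply is_derive_unique, Hdu).
    replace (Derive (fun x => dv x) x) with (d2v x) by (symmetry; now apply is_derive_unique, Hdv).
    replace (Rpower x p) with (Rpower x (p - 1) * x)
      by (rewrite <- Rpower_plus_1 by exact Hx; f_equal; ring).
    transitivity (Rpower x (p - 1) * exp x *
      (u x * (x * d2v x + (p + x) * dv x + q * v x) - v x * (x * d2u x + (p + x) * du x + q * u x)));
      [ring | rewrite Hu_ode, Hv_ode by exact Hx; ring].
Qed.

Lemma scaled_wronskian_const (x y : R) : 0 < x -> 0 < y -> scaled_wronskian x = scaled_wronskian y.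
Proof.
  intros Hx Hy.
  assert (Hmin : 0 < Rmin x y) by now apply Rmin_glb_lt.
  destruct (MVT_gen scaled_wronskian x y (fun _ => 0)) as [c [_ Hc]].
  - intros t Ht. apply is_derive_scaled_wronskian. lra.
  - intros t Ht. apply continuity_pt_filterlim. refine (ex_derive_continuous _ _ _).
    eexists. apply is_derive_scaled_wronskian. lra.
  - lra.
Qed.

Lemma scaled_wronskian_eq_of_filterlim (l : R) :
  filterlim scaled_wronskian (at_right 0) (locally l) ->
  forall x, 0 < x -> scaled_wronskian x = l.
Proof.
  intros Hl x Hx. apply (filterlim_locally_unique (F := at_right 0) scaled_wronskian); [|exact Hl].
  apply filterlim_ext_loc with (fun _ => scaled_wronskian x); [|apply filterlim_const].
  exists (mkposreal 1 Rlt_0_1). intros y _ Hy. now apply scaled_wronskian_const.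
Qed.

End AbelIdentity.

Definition kummerT_neg_deriv (b a x : R) : R :=
  - exp (- x) / Gamma (a - b)
  * (Lap (tricomi_kernel (a - b) b) x + Lap (fun t => t * tricomi_kernel (a - b) b t) x).

Definition kummerT_neg_deriv2 (b a x : R) : R :=
  exp (- x) / Gamma (a - b)
  * (Lap (tricomi_kernel (a - b) b) x + 2 * Lap (fun t => t * tricomi_kernel (a - b) b t) x
     + Lap (fun t => t * (t * tricomi_kernel (a - b) b t)) x).

Definition kummer_wronskian (b a x : R) : R :=
  scaled_wronskian a (fun x => kummerM b a (- x)) (fun x => kummerT b a (- x))
    (fun x => - kummerM' b a (- x)) (kummerT_neg_deriv b a) x.

Section KummerWronskian.

Variables al be : R.
Hypothesis Hal : 0 < al < 1.
Hypothesis Hbe : be <= 0.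

Lemma kummerT_neg (x : R) :
  kummerT be al (- x) = exp (- x) / Gamma (al - be) * Lap (tricomi_kernel (al - be) be) x.
Proof. now rewrite kummerT_Lap, Ropp_involutive. Qed.

Lemma is_derive_kummerM_neg (x : R) :
  is_derive (fun x => kummerM be al (- x)) x (- kummerM' be al (- x)).
Proof. apply is_derive_comp_opp, is_derive_kummerM. lra. Qed.

Lemma is_derive_kummerM'_neg (x : R) :
  is_derive (fun x => - kummerM' be al (- x)) x (kummerM'' be al (- x)).
Proof.
  rewrite <- (Ropp_involutive (kummerM'' be al (- x))).
  apply (is_derive_opp (fun x => kummerM' be al (- x))), is_derive_comp_opp, is_derive_kummerM'. lra.
Qed.

Lemma kummerM_neg_ode (x : R) :
  x * kummerM'' be al (- x) + (al + x) * (- kummerM' be al (- x)) + be * kummerM be al (- x) = 0.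
Proof.
  generalize (kummerM_ode al be ltac:(lra) (- x)).
  replace (al - - x) with (al + x) by ring. lra.
Qed.

Lemma is_derive_kummerT_neg (x : R) : 0 < x ->
  is_derive (fun x => kummerT be al (- x)) x (kummerT_neg_deriv be al x).
Proof.
  intros Hx.
  apply (is_derive_ext (fun x => exp (- x) / Gamma (al - be) * Lap (tricomi_kernel (al - be) be) x));
    [intros t; now rewrite kummerT_neg|].
  assert (HL := is_derive_Lap_tricomi (al - be) be ltac:(lra) Hbe x Hx).
  unfold kummerT_neg_deriv. auto_derive; [repeat split; eexists; exact HL|].
  replace (Derive (fun x => Lap (tricomi_kernel (al - be) be) x) x)
    with (- Lap (fun t => t * tricomi_kernel (al - be) be t) x)
    by (symmetry; now apply is_derive_unique).
  unfold Rdiv. ring.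
Qed.

Lemma is_derive_kummerT_neg_deriv (x : R) : 0 < x ->
  is_derive (kummerT_neg_deriv be al) x (kummerT_neg_deriv2 be al x).
Proof.
  intros Hx.
  assert (HL0 := is_derive_Lap_tricomi (al - be) be ltac:(lra) Hbe x Hx).
  assert (HL1 := is_derive_Lap_tricomi_mul_id (al - be) be ltac:(lra) Hbe x Hx).
  unfold kummerT_neg_deriv, kummerT_neg_deriv2.
  auto_derive; [repeat split; eexists; [exact HL0 | exact HL1]|].
  replace (Derive (fun x => Lap (tricomi_kernel (al - be) be) x) x)
    with (- Lap (fun t => t * tricomi_kernel (al - be) be t) x)
    by (symmetry; now apply is_derive_unique).
  replace (Derive (fun x => Lap (fun t => t * tricomi_kernel (al - be) be t) x) x)
    with (- Lap (fun t => t * (t * tricomi_kernel (al - be) be t)) x)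
    by (symmetry; now apply is_derive_unique).
  unfold Rdiv. ring.
Qed.

Lemma kummerT_neg_ode (x : R) : 0 < x ->
  x * kummerT_neg_deriv2 be al x + (al + x) * kummerT_neg_deriv be al x
  + be * kummerT be al (- x) = 0.
Proof.
  intros Hx. rewrite kummerT_neg. unfold kummerT_neg_deriv, kummerT_neg_deriv2.
  generalize (Lap_tricomi_recurrence (al - be) be ltac:(lra) Hbe x Hx).
  replace (al - be + be - x) with (al - x) by ring.
  intros Hrec.
  transitivity (exp (- x) / Gamma (al - be) *
    (x * Lap (fun t => t * (t * tricomi_kernel (al - be) be t)) x
     - (al - x) * Lap (fun t => t * tricomi_kernel (al - be) be t) x
     - (al - be) * Lap (tricomi_kernel (al - be) be) x)); unfold Rdiv; [ring | rewrite Hrec; ring].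
Qed.

Lemma filterlim_kummer_wronskian :
  filterlim (kummer_wronskian be al) (at_right 0) (locally (- Gamma_pos al / Gamma (al - be))).
Proof.
  assert (HM := filterlim_at_right_continuous (fun x => kummerM be al (- x)) 0
                  (ex_derive_continuous _ _ (ex_intro _ _ (is_derive_kummerM_neg 0)))).
  assert (HM' := filterlim_at_right_continuous (fun x => kummerM' be al (- x)) 0
                   (ex_derive_continuous _ _ (ex_intro _ _
                      (is_derive_comp_opp _ 0 _ (is_derive_kummerM' al be ltac:(lra) (- 0)))))).
  cbv beta in HM, HM'. rewrite Ropp_0, kummerM_0 in HM.
  assert (H0 := filterlim_Rpower_mul_Lap_tricomi (al - be) be ltac:(lra) Hbe ltac:(lra)).
  assert (H1 := filterlim_Rpower_mul_Lap_tricomi_mul_id (al - be) be ltac:(lra) Hbe ltac:(lra)).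
  replace (al - be + be) with al in H0, H1 by ring.
  apply filterlim_ext_loc with (fun x => / Gamma (al - be) *
    ((kummerM' be al (- x) - kummerM be al (- x)) * (Rpower x al * Lap (tricomi_kernel (al - be) be) x)
     - kummerM be al (- x) * (Rpower x al * Lap (fun t => t * tricomi_kernel (al - be) be t) x))).
  - exists (mkposreal 1 Rlt_0_1). intros y _ Hy.
    unfold kummer_wronskian, scaled_wronskian, kummerT_neg_deriv. rewrite kummerT_neg.
    assert (Hexp : exp y * exp (- y) = 1) by (rewrite <- exp_plus, Rplus_opp_r; apply exp_0).
    transitivity (exp y * exp (- y) * (/ Gamma (al - be) *
      ((kummerM' be al (- y) - kummerM be al (- y)) * (Rpower y al * Lap (tricomi_kernel (al - be) be) y)
       - kummerM be al (- y) * (Rpower y al * Lap (fun t => t * tricomi_kernel (al - be) be t) y))));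
      [rewrite Hexp; ring | unfold Rdiv; ring].
  - replace (- Gamma_pos al / Gamma (al - be))
      with (/ Gamma (al - be) * ((kummerM' be al (- 0) - 1) * 0 - 1 * Gamma_pos al))
      by (unfold Rdiv; ring).
    apply filterlim_Rmult; [apply filterlim_const|].
    apply filterlim_Rminus; apply filterlim_Rmult; try assumption.
    now apply filterlim_Rminus.
Qed.

Lemma kummer_wronskian_eq (x : R) : 0 < x ->
  kummer_wronskian be al x = - Gamma_pos al / Gamma (al - be).
Proof.
  apply (scaled_wronskian_eq_of_filterlim _ be _ _ _ _ (fun x => kummerM'' be al (- x))
           (kummerT_neg_deriv2 be al)).
  - intros y _. apply is_derive_kummerM_neg.
  - exact is_derive_kummerT_neg.
  - intros y _. apply is_derive_kummerM'_neg.
  - exact is_derive_kummerT_neg_deriv.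
  - intros y _. apply kummerM_neg_ode.
  - exact kummerT_neg_ode.
  - exact filterlim_kummer_wronskian.
Qed.

End KummerWronskian.

(** * The substitution x = j z^n *)

Lemma inv_INR_range (n : nat) : (2 <= n)%nat -> 0 < 1 / INR n <= 1 / 2.
Proof.
  intros Hn. assert (HN : 2 <= INR n) by (replace 2 with (INR 2) by reflexivity; now apply le_INR).
  split; [apply Rdiv_lt_0_compat; lra|]. apply Rmult_le_reg_r with (2 * INR n); [lra|].
  unfold Rdiv. field_simplify; lra.
Qed.

Lemma kummer_parameters_range (n j : nat) (lambda : R) :
  (2 <= n)%nat -> (0 < j)%nat -> INR ((n - 1) * j) / 2 <= lambda ->
  0 < 1 - 1 / INR n < 1 /\ (1 / 2) * (1 - 1 / INR n) - lambda / (INR j * INR n) <= 0.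
Proof.
  intros hn hj hlam.
  assert (HN : 2 <= INR n) by (replace 2 with (INR 2) by reflexivity; now apply le_INR).
  assert (HJ : 0 < INR j) by now apply lt_0_INR.
  split; [generalize (inv_INR_range n hn); lra|].
  rewrite mult_INR, minus_INR in hlam by lia. cbn [INR] in hlam.
  replace ((1 / 2) * (1 - 1 / INR n)) with ((INR n - 1) * INR j / 2 / (INR j * INR n)) by (field; lra).
  unfold Rdiv at 1 3. rewrite <- Rmult_minus_distr_r.
  apply Rmult_le_0_r; [lra | left; apply Rinv_0_lt_compat; nra].
Qed.

Lemma mul_pow_pred_Rpower (J z : R) (n : nat) : (1 <= n)%nat -> 0 < J -> 0 < z ->
  J * z ^ (n - 1) = Rpower J (1 / INR n) * Rpower (J * z ^ n) (1 - 1 / INR n).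
Proof.
  intros Hn HJ Hz.
  assert (HN : 1 <= INR n) by (replace 1 with (INR 1) by reflexivity; now apply le_INR).
  rewrite <- Rpower_mult_distr, <- (Rpower_pow n z), Rpower_mult by (try apply pow_lt; lra).
  rewrite <- Rmult_assoc, <- Rpower_plus.
  replace (1 / INR n + (1 - 1 / INR n)) with 1 by ring.
  replace (INR n * (1 - 1 / INR n)) with (INR (n - 1))
    by (rewrite minus_INR by exact Hn; cbn; field; lra).
  now rewrite Rpower_1, Rpower_pow.
Qed.

Lemma is_derive_exp_half_comp (X u : R -> R) (z dX du : R) :
  is_derive X z dX -> is_derive u (X z) du ->
  is_derive (fun z => exp (X z / 2) * u (X z)) z (dX * (exp (X z / 2) * (u (X z) / 2 + du))).
Proof.
  intros HX Hu.
  apply (is_derive_comp (fun y => exp (y / 2) * u y) X z); [|exact HX].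
  auto_derive; [repeat split; now exists du|].
  replace (Derive (fun x => u x) (X z)) with du by (symmetry; now apply is_derive_unique).
  unfold Rdiv. ring.
Qed.

Lemma wronskian_exp_half (y dX u du v dv : R) :
  exp (y / 2) * u * (dX * (exp (y / 2) * (v / 2 + dv)))
  - dX * (exp (y / 2) * (u / 2 + du)) * (exp (y / 2) * v)
  = dX * exp y * (u * dv - du * v).
Proof.
  replace (exp y) with (exp (y / 2) * exp (y / 2)) by (rewrite <- exp_plus; f_equal; field).
  unfold Rdiv. ring.
Qed.

Lemma kummer_wronskian_power_map (n : nat) (J z be : R) :
  (2 <= n)%nat -> 0 < J -> 0 < z -> be <= 0 ->
  let al := 1 - 1 / INR n in
  let X := J * z ^ n in
  INR n * J * z ^ (n - 1) * exp X
  * (kummerM be al (- X) * kummerT_neg_deriv be al X - - kummerM' be al (- X) * kummerT be al (- X))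
  = Gamma (al - 1) / Gamma (al - be) * Rpower J (1 / INR n).
Proof.
  intros Hn HJ Hz Hbe al X.
  assert (HN : 2 <= INR n) by (replace 2 with (INR 2) by reflexivity; now apply le_INR).
  assert (Hal : 0 < al < 1) by (generalize (inv_INR_range n Hn); unfold al; lra).
  assert (HX : 0 < X) by (apply Rmult_lt_0_compat; [exact HJ | now apply pow_lt]).
  generalize (kummer_wronskian_eq al be Hal Hbe X HX).
  unfold kummer_wronskian, scaled_wronskian. intros HW.
  replace (al - 1) with (- (1 / INR n)) by (unfold al; ring).
  rewrite Gamma_opp_inv by lra. fold al.
  replace (INR n * J * z ^ (n - 1)) with (INR n * (J * z ^ (n - 1))) by ring.
  rewrite (mul_pow_pred_Rpower J z n) by (lia || lra). fold X al.
  transitivity (INR n * Rpower J (1 / INR n) *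
    (Rpower X al * exp X * (kummerM be al (- X) * kummerT_neg_deriv be al X
      - - kummerM' be al (- X) * kummerT be al (- X))));
    [unfold Rdiv; ring | rewrite HW; unfold Rdiv; ring].
Qed.

Theorem proposition4p1 (n j : nat) (lambda : R)
  (hn : (2 <= n)%nat) (hj : (0 < j)%nat)
  (hlam : INR ((n - 1) * j) / 2 <= lambda) :
  let alpha := 1 - 1 / INR n in
  let beta := (1 / 2) * (1 - 1 / INR n) - lambda / (INR j * INR n) in
  let G := fun z : R => exp (INR j * z ^ n / 2) * kummerM beta alpha (- INR j * z ^ n) in
  let D := fun z : R => exp (INR j * z ^ n / 2) * kummerT beta alpha (- INR j * z ^ n) in
  forall z : R, 0 < z ->
    exists dG dD : R,
      is_derive G z dG /\ is_derive D z dD /\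
      G z * dD - dG * D z =
        Gamma (alpha - 1) / Gamma (alpha - beta) * Rpower (INR j) (1 / INR n).
Proof.
  intros alpha beta G D z Hz.
  destruct (kummer_parameters_range n j lambda hn hj hlam) as [Halpha Hbeta].
  fold alpha beta in Halpha, Hbeta.
  set (X := fun z => INR j * z ^ n).
  assert (HX : 0 < X z) by (apply Rmult_lt_0_compat; [now apply lt_0_INR | now apply pow_lt]).
  assert (HdX : is_derive X z (INR n * INR j * z ^ (n - 1))).
  { unfold X. auto_derive; [exact I|]. replace (Nat.pred n) with (n - 1)%nat by lia. ring. }
  assert (HG : forall t, exp (X t / 2) * kummerM beta alpha (- X t) = G t)
    by (intros t; unfold G, X; do 3 f_equal; ring).
  assert (HD : forall t, exp (X t / 2) * kummerT beta alpha (- X t) = D t)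
    by (intros t; unfold D, X; do 3 f_equal; ring).
  eexists. eexists. split; [|split].
  - apply (is_derive_ext _ _ _ _ HG).
    apply (is_derive_exp_half_comp X (fun x => kummerM beta alpha (- x)) z);
      [exact HdX | apply is_derive_kummerM_neg; lra].
  - apply (is_derive_ext _ _ _ _ HD).
    apply (is_derive_exp_half_comp X (fun x => kummerT beta alpha (- x)) z);
      [exact HdX | now apply is_derive_kummerT_neg].
  - rewrite <- HG, <- HD, wronskian_exp_half.
    apply kummer_wronskian_power_map; [exact hn | now apply lt_0_INR | exact Hz | exact Hbeta].
Qed.
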